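(* Let ${\mathbf{x}}^* \in \mathbb{R}^n$, ${\mathbf{x}}^*\ge 0$, $\mathcal{J} = \mathrm{supp}({\mathbf{x}}^* )$, and $s \in [\|{\mathbf{x}}^*\|_\infty, \infty]$. Let $\mathcal{J}' \supseteq \mathcal{J}$ be an index set for which there exists a vector ${\mathbf{c}}$ with $$\frac{P {\mathbf{e}}_j}{\| P {\mathbf{e}}_j \|_2} \cdot {\mathbf{c}} = 1 \ \ \forall j \in \mathcal{J}', \qquad \frac{P {\mathbf{e}}_i}{\| P {\mathbf{e}}_i \|_2} \cdot {\mathbf{c}} < 1 \ \ \forall i \in (\mathcal{J}')^c. \qquad (\dagger)$$ Then every solution ${\mathbf{y}}$ of $$\min_{0 \leq {\mathbf{x}} \leq s} \| W {\mathbf{x}} \|_1 \quad \text{subject to} \quad A {\mathbf{x}} = A {\mathbf{x}}^*$$ satisfies $\mathrm{supp}({\mathbf{y}}) \subseteq \mathcal{J}'$. Consequently, every such solution satisfies $\mathrm{supp}({\mathbf{y}}) \subseteq \overline{\mathcal{J}}$, where $\overline{\mathcal{J}} = \bigcap\{\mathcal{J}' : \mathcal{J}' \supseteq \mathcal{J} \text{ and there exists } {\mathbf{c}} \text{ such that } (\dagger) \text{ holds for } \mathcal{J}'\}$, assumed nonempty.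
   Context: $A \in \mathbb{R}^{m\times n}$ is a matrix, $A^\dagger$ its Moore–Penrose pseudoinverse, and $P = A^\dagger A$ the orthogonal projection onto $\mathcal{N}(A)^\perp$. ${\mathbf{e}}_1,\dots,{\mathbf{e}}_n$ are the standard unit vectors, assumed not to lie in $\mathcal{N}(A)$, so $w_i := \|P{\mathbf{e}}_i\|_2 > 0$; $W = \mathrm{diag}(w_1,\dots,w_n)$. Inequalities are componentwise; $s=\infty$ means only ${\mathbf{x}}\ge 0$. *)

From HB Require Import structures.
From mathcomp Require Import all_boot all_order all_algebra.
Set Implicit Arguments. Unset Strict Implicit. Unset Printing Implicit Defensive.
Import Order.TTheory GRing.Theory Num.Theory.
Local Open Scope ring_scope.

Section Defs.
Variables (R : rcfType) (m n : nat).

(* X is the Moore-Penrose pseudoinverse of A (the four Penrose conditions,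
   which determine it uniquely). *)
Definition is_MP_pinv (A : 'M[R]_(m, n)) (X : 'M[R]_(n, m)) : Prop :=
  [/\ A *m X *m A = A, X *m A *m X = X, (A *m X)^T = A *m X & (X *m A)^T = X *m A].

Definition evec (i : 'I_n) : 'cV[R]_n := delta_mx i 0.

Definition dotv (u v : 'cV[R]_n) : R := \sum_k u k 0 * v k 0.
Definition norm2 (u : 'cV[R]_n) : R := Num.sqrt (dotv u u).
Definition norm1 (u : 'cV[R]_n) : R := \sum_k `|u k 0|.
Definition norminf (u : 'cV[R]_n) : R := \big[Num.max/0]_k `|u k 0|.

Definition supp (u : 'cV[R]_n) : {set 'I_n} := [set i | u i 0 != 0].

Definition Wmat (P : 'M[R]_n) : 'M[R]_n :=
  diag_mx (\row_i norm2 (P *m evec i)).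

(* feasible set of the program: 0 <= x <= s (s = None means s = +oo), A x = A x* *)
Definition feasible (A : 'M[R]_(m, n)) (s : option R) (xs x : 'cV[R]_n) : Prop :=
  (forall i, 0 <= x i 0) /\ (forall t, s = Some t -> forall i, x i 0 <= t) /\
  A *m x = A *m xs.

Definition is_solution (A : 'M[R]_(m, n)) (P : 'M[R]_n) (s : option R)
  (xs y : 'cV[R]_n) : Prop :=
  feasible A s xs y /\
  forall x, feasible A s xs x -> norm1 (Wmat P *m y) <= norm1 (Wmat P *m x).

Definition dagger (P : 'M[R]_n) (J' : {set 'I_n}) : Prop :=
  exists c : 'cV[R]_n,
    (forall j, j \in J' -> dotv ((norm2 (P *m evec j))^-1 *: (P *m evec j)) c = 1) /\
    (forall i, i \notin J' -> dotv ((norm2 (P *m evec i))^-1 *: (P *m evec i)) c < 1).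

Definition admissible (P : 'M[R]_n) (xs : 'cV[R]_n) (J' : {set 'I_n}) : Prop :=
  supp xs \subset J' /\ dagger P J'.

Definition in_Jbar (P : 'M[R]_n) (xs : 'cV[R]_n) (i : 'I_n) : Prop :=
  forall J', admissible P xs J' -> i \in J'.

End Defs.

From HB Require Import structures.
From mathcomp Require Import all_boot all_order all_algebra.
Import Order.TTheory GRing.Theory Num.Theory.
Local Open Scope ring_scope.

(* With w_i = |P e_i| and d_i = P e_i . c for a vector c certifying (dagger),
   d_i = w_i on J' and d_i < w_i off J'.  Since A x = A x* forces P x = P x*,
   the linear functional x |-> sum_i d_i x_i = (P x) . c is constant on the
   feasible set, and on x* (supported in J') it equals |W x*|_1.  A minimiser y
   therefore satisfies sum_i w_i y_i <= sum_i d_i y_i, and complementary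
   slackness kills y_i wherever d_i < w_i, i.e. outside J'. *)

Lemma complementary_slackness (R : numDomainType) (I : finType) (y d w : I -> R) :
  (forall i, 0 <= y i) -> (forall i, d i <= w i) ->
  \sum_i w i * y i <= \sum_i d i * y i ->
  forall i, d i < w i -> y i = 0.
Proof.
move=> y_ge0 d_le_w sum_le i d_lt_w.
have slack_ge0 l : predT l -> 0 <= (w l - d l) * y l.
  by move=> _; rewrite mulr_ge0 // subr_ge0.
have slack_eq0 : \sum_i (w i - d i) * y i = 0.
  apply/eqP; rewrite eq_le sumr_ge0 // andbT.
  under eq_bigr do rewrite mulrBl.
  by rewrite sumrB subr_le0.
have /eqP := psumr_eq0P slack_ge0 slack_eq0 (isT : predT i).
by rewrite mulf_eq0 subr_eq0 (gt_eqF d_lt_w) => /eqP.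
Qed.

Section Vectors.
Variables (R : rcfType) (n : nat).

Lemma mulmx_evec k (M : 'M[R]_(k, n)) i : M *m evec R i = col i M.
Proof. by rewrite /evec colE. Qed.

Lemma dotvZl a (u c : 'cV[R]_n) : dotv (a *: u) c = a * dotv u c.
Proof. by rewrite /dotv big_distrr; apply: eq_bigr => k _; rewrite mxE /= mulrA. Qed.

Lemma dotv_mulmx (M : 'M[R]_n) (y c : 'cV[R]_n) :
  dotv (M *m y) c = \sum_i y i 0 * dotv (M *m evec R i) c.
Proof.
rewrite /dotv; under eq_bigr do rewrite mxE big_distrl.
rewrite exchange_big; apply: eq_bigr => i _; rewrite big_distrr.
by apply: eq_bigr => k _; rewrite mulmx_evec !mxE /= mulrA [y i 0 * _]mulrC.
Qed.

Lemma norm2_gt0 (u : 'cV[R]_n) : u != 0 -> 0 < norm2 u.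
Proof.
move=> u_neq0; rewrite /norm2 sqrtr_gt0 lt_def.
have sq_ge0 k : predT k -> 0 <= u k 0 * u k 0 by move=> _; rewrite -expr2 sqr_ge0.
rewrite sumr_ge0 // andbT; apply: contra u_neq0 => /eqP dot0.
apply/eqP/matrixP => k j; rewrite ord1 mxE.
by have /eqP := psumr_eq0P sq_ge0 dot0 (isT : predT k); rewrite mulf_eq0 orbb => /eqP.
Qed.

Lemma norm1_Wmat (P : 'M[R]_n) (y : 'cV[R]_n) : (forall i, 0 <= y i 0) ->
  norm1 (Wmat P *m y) = \sum_i norm2 (P *m evec R i) * y i 0.
Proof.
move=> y_ge0; rewrite /norm1 /Wmat mul_diag_mx; apply: eq_bigr => i _.
by rewrite !mxE ger0_norm // mulr_ge0 // sqrtr_ge0.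
Qed.

End Vectors.

Section Support.
Variables (R : rcfType) (m n : nat) (A : 'M[R]_(m, n)) (Adag : 'M[R]_(n, m)).
Hypothesis pinvA : is_MP_pinv A Adag.
Hypothesis A_evec_neq0 : forall i, A *m evec R i != 0.

Local Notation P := (Adag *m A).

Lemma mulmx_proj : A *m P = A.
Proof. by case: pinvA => AXA _ _ _; rewrite mulmxA. Qed.

Lemma proj_evec_neq0 i : P *m evec R i != 0.
Proof.
apply: contra (A_evec_neq0 i) => /eqP Pe0.
by rewrite -mulmx_proj -mulmxA Pe0 mulmx0.
Qed.

Lemma dagger_certificate (J' : {set 'I_n}) : dagger P J' ->
  exists c : 'cV[R]_n,
    (forall j, j \in J' -> dotv (P *m evec R j) c = norm2 (P *m evec R j)) /\
    (forall i, i \notin J' -> dotv (P *m evec R i) c < norm2 (P *m evec R i)).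
Proof.
case=> c [on_J' off_J']; exists c; split=> i /[dup] iJ'.
- move/on_J'; rewrite dotvZl => dot1.
  have w_neq0 : norm2 (P *m evec R i) != 0 by rewrite gt_eqF ?norm2_gt0 ?proj_evec_neq0.
  by rewrite -[RHS]mulr1 -dot1 mulrA divff ?mul1r.
- move/off_J'; rewrite dotvZl mulrC.
  by rewrite ltr_pdivrMr ?mul1r // norm2_gt0 // proj_evec_neq0.
Qed.

Lemma solution_supp_subset (s : option R) (xs y : 'cV[R]_n) (J' : {set 'I_n}) :
  (forall i, 0 <= xs i 0) -> (forall t, s = Some t -> norminf xs <= t) ->
  admissible P xs J' -> is_solution A P s xs y -> supp y \subset J'.
Proof.
move=> xs_ge0 xs_le_s [supp_xs /dagger_certificate [c [on_J' off_J']]].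
move=> [[y_ge0 [_ Ay]] y_min].
pose w i := norm2 (P *m evec R i); pose d i := dotv (P *m evec R i) c.
have d_le_w i : d i <= w i.
  by rewrite /d /w; have [/on_J'->//|/off_J'/ltW] := boolP (i \in J').
have xs_feasible : feasible A s xs xs.
  split=> //; split=> // t /xs_le_s xs_le_t i; apply: le_trans xs_le_t.
  by rewrite /norminf (bigD1 i) //= le_max ler_norm.
have xs_eq0 i : i \notin J' -> xs i 0 = 0.
  move=> iJ'; apply/eqP; apply: contraNT iJ' => xs_i_neq0.
  by apply: (subsetP supp_xs); rewrite inE.
have dy_eq : \sum_i d i * y i 0 = \sum_i w i * xs i 0.
  have Py : P *m y = P *m xs by rewrite -!mulmxA Ay.
  rewrite (eq_bigr (fun i => y i 0 * d i)) => [|i _]; last exact: mulrC.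
  rewrite -dotv_mulmx Py dotv_mulmx; apply: eq_bigr => i _.
  have [/on_J' dw|/xs_eq0->] := boolP (i \in J'); last by rewrite mul0r mulr0.
  by rewrite dw mulrC.
have wy_le : \sum_i w i * y i 0 <= \sum_i d i * y i 0.
  by rewrite dy_eq -!norm1_Wmat //; exact: y_min xs_feasible.
apply/subsetP => i; rewrite inE; apply: contraR => iJ'.
by rewrite (@complementary_slackness _ _ _ d w y_ge0 d_le_w wy_le i (off_J' i iJ')).
Qed.

End Support.

Theorem proposition1 (R : rcfType) (m n : nat) (A : 'M[R]_(m, n))
  (Adag : 'M[R]_(n, m)) (hAdag : is_MP_pinv A Adag)
  (hE : forall i : 'I_n, A *m evec R i != 0)
  (xs : 'cV[R]_n) (hxs : forall i, 0 <= xs i 0)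
  (s : option R) (hs : forall t, s = Some t -> norminf xs <= t) :
  let P := Adag *m A in
  (forall J' : {set 'I_n}, admissible P xs J' ->
     forall y, is_solution A P s xs y -> supp y \subset J') /\
  ((exists J', admissible P xs J') ->
     forall y, is_solution A P s xs y ->
       forall i, i \in supp y -> in_Jbar P xs i).
Proof.
move=> P; have supp_sub := @solution_supp_subset R m n A Adag hAdag hE s xs.
split=> [J' admJ' y sol_y|_ y sol_y i supp_i J' admJ'].
- exact: supp_sub hxs hs admJ' sol_y.
- exact: subsetP (supp_sub _ _ hxs hs admJ' sol_y) i supp_i.
Qed.
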